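(* Let $R$ be a commutative ring and $e\in R$ an idempotent. Then $R$ is locally stable if and only if both $eRe$ and $(1-e)R(1-e)$ are locally stable.
   Context: All rings are commutative with identity ($eRe=eR$ is a ring with identity $e$). A ring $S$ has stable range 1 if whenever $aS+bS=S$ there is $y\in S$ with $a+by$ a unit. $S$ is locally stable if whenever $a,b\in S$ with $aS+bS=S$ there is $y\in S$ such that $S/(a+by)S$ has stable range 1. *)

From HB Require Import structures.
From mathcomp Require Import all_boot all_algebra.
Set Implicit Arguments. Unset Strict Implicit. Unset Printing Implicit Defensive.
Import GRing.Theory.
Local Open Scope ring_scope.

(* Rings are commutative with identity; possibly trivial (0 = 1), hence
   comPzRingType.  Corner rings eRe and quotients S/cS may be the zero ring,
   which cannot be a MathComp (nonzero) ring type, so they are represented by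
   their carrier inside R together with the induced operations. *)

Section Defs.
Variable R : comPzRingType.

Definition cong_mod (c x y : R) : Prop := exists s : R, x - y = c * s.

Definition sr1_quot (c : R) : Prop :=
  forall a b : R,
    (exists x y : R, cong_mod c (a * x + b * y) 1) ->
    exists y : R, exists z : R, cong_mod c ((a + b * y) * z) 1.

Definition stable_range1 : Prop :=
  forall a b : R, (exists x y : R, a * x + b * y = 1) ->
    exists y : R, exists z : R, (a + b * y) * z = 1.

Definition locally_stable : Prop :=
  forall a b : R, (exists x y : R, a * x + b * y = 1) ->
    exists y : R, sr1_quot (a + b * y).

Definition in_corner (e x : R) : Prop := exists r : R, x = e * r * e.

Definition corner_cong_mod (e c x y : R) : Prop :=
  exists s : R, in_corner e s /\ x - y = c * s.

Definition corner_sr1_quot (e c : R) : Prop :=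
  forall a b : R, in_corner e a -> in_corner e b ->
    (exists x y : R, in_corner e x /\ in_corner e y /\
        corner_cong_mod e c (a * x + b * y) e) ->
    exists y : R, in_corner e y /\ exists z : R, in_corner e z /\
        corner_cong_mod e c ((a + b * y) * z) e.

Definition corner_locally_stable (e : R) : Prop :=
  forall a b : R, in_corner e a -> in_corner e b ->
    (exists x y : R, in_corner e x /\ in_corner e y /\ a * x + b * y = e) ->
    exists y : R, in_corner e y /\ corner_sr1_quot e (a + b * y).

End Defs.

From HB Require Import structures.
From mathcomp Require Import all_boot all_algebra.
From mathcomp Require Import ring.
Import GRing.Theory.
Local Open Scope ring_scope.
Set Implicit Arguments.
Unset Strict Implicit.

(* The idempotent e splits R as the product eR x (1 - e)R of rings with
   identities e and 1 - e, and a unimodular pair, a quotient R/cR and a unit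
   of R/cR all split componentwise.  Hence a corner datum (a, b) in eRe lifts
   to the datum (a + (1 - e), b) of R, whose solution y projects back to ey;
   conversely the solutions in the two corners add up to a solution in R. *)

Lemma idempotent_compl (R : comPzRingType) (e : R) :
  e * e = e -> (1 - e) * (1 - e) = 1 - e.
Proof. by move=> he; ring: he. Qed.

Section CornerProjection.
Variables (R : comPzRingType) (e : R).
Hypothesis he : e * e = e.

Lemma in_corner_mul (r : R) : in_corner e (e * r).
Proof. by exists r; ring: he. Qed.

Lemma cong_mod_corner (c x y : R) :
  cong_mod c x y -> corner_cong_mod e (e * c) (e * x) (e * y).
Proof.
case=> s hs; exists (e * s); split; first exact: in_corner_mul.
by rewrite -mulrBr hs; ring: he.
Qed.

Lemma corner_sr1_quot_mul (c : R) : sr1_quot c -> corner_sr1_quot e (e * c).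
Proof.
move=> hc a b [ra ->] [rb ->] [_ [_ [[rx ->] [[ry ->] [_ [[rs ->] hs]]]]]].
have [|y [z hz]] := hc (e * ra * e + (1 - e)) (e * rb * e).
  exists (e * rx * e + (1 - e)), (e * ry * e), (e * rs * e).
  have -> : (e * ra * e + (1 - e)) * (e * rx * e + (1 - e))
      + e * rb * e * (e * ry * e) - 1
    = e * ra * e * (e * rx * e) + e * rb * e * (e * ry * e) - e by ring: he.
  by rewrite hs; ring: he.
exists (e * y); split; first exact: in_corner_mul.
exists (e * z); split; first exact: in_corner_mul.
move: (cong_mod_corner hz); rewrite mulr1.
have -> // : e * ((e * ra * e + (1 - e) + e * rb * e * y) * z)
  = (e * ra * e + e * rb * e * (e * y)) * (e * z) by ring: he.
Qed.

Lemma corner_locally_stable_of_locally_stable :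
  locally_stable R -> corner_locally_stable e.
Proof.
move=> hR a b [ra ->] [rb ->] [_ [_ [[rx ->] [[ry ->] hxy]]]].
have [|y hy] := hR (e * ra * e + (1 - e)) (e * rb * e).
  exists (e * rx * e + (1 - e)), (e * ry * e).
  have -> : (e * ra * e + (1 - e)) * (e * rx * e + (1 - e))
      + e * rb * e * (e * ry * e)
    = e * ra * e * (e * rx * e) + e * rb * e * (e * ry * e) + (1 - e)
    by ring: he.
  by rewrite hxy subrKC.
exists (e * y); split; first exact: in_corner_mul.
move: (corner_sr1_quot_mul hy).
have -> // : e * (e * ra * e + (1 - e) + e * rb * e * y)
  = e * ra * e + e * rb * e * (e * y) by ring: he.
Qed.

End CornerProjection.

Section CornerGluing.
Variables (R : comPzRingType) (e : R).
Hypothesis he : e * e = e.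
Let heC := idempotent_compl he.

Lemma cong_mod_of_corners (c x y : R) :
  corner_cong_mod e (e * c) (e * x) (e * y) ->
  corner_cong_mod (1 - e) ((1 - e) * c) ((1 - e) * x) ((1 - e) * y) ->
  cong_mod c x y.
Proof.
move=> [_ [[r1 ->] h1]] [_ [[r2 ->] h2]].
exists (e * r1 * e + (1 - e) * r2 * (1 - e)).
have -> : x - y = (e * x - e * y) + ((1 - e) * x - (1 - e) * y) by ring.
by rewrite h1 h2; ring: he.
Qed.

Lemma sr1_quot_of_corners (c : R) :
  corner_sr1_quot e (e * c) -> corner_sr1_quot (1 - e) ((1 - e) * c) ->
  sr1_quot c.
Proof.
move=> h1 h2 a b [x [y hxy]].
have [|_ [[r1 ->] [_ [[q1 ->] hq1]]]] :=
  h1 _ _ (in_corner_mul he a) (in_corner_mul he b).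
  exists (e * x), (e * y).
  do 2!(split; first exact: in_corner_mul).
  move: (cong_mod_corner he hxy); rewrite mulr1.
  have -> // : e * (a * x + b * y) = e * a * (e * x) + e * b * (e * y)
    by ring: he.
have [|_ [[r2 ->] [_ [[q2 ->] hq2]]]] :=
  h2 _ _ (in_corner_mul heC a) (in_corner_mul heC b).
  exists ((1 - e) * x), ((1 - e) * y).
  do 2!(split; first exact: in_corner_mul).
  move: (cong_mod_corner heC hxy); rewrite mulr1.
  have -> // : (1 - e) * (a * x + b * y)
    = (1 - e) * a * ((1 - e) * x) + (1 - e) * b * ((1 - e) * y) by ring: he.
exists (e * r1 * e + (1 - e) * r2 * (1 - e)),
  (e * q1 * e + (1 - e) * q2 * (1 - e)).
apply: cong_mod_of_corners; rewrite mulr1.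
- have -> : e * ((a + b * (e * r1 * e + (1 - e) * r2 * (1 - e)))
                 * (e * q1 * e + (1 - e) * q2 * (1 - e)))
    = (e * a + e * b * (e * r1 * e)) * (e * q1 * e) by ring: he.
  exact: hq1.
- have -> : (1 - e) * ((a + b * (e * r1 * e + (1 - e) * r2 * (1 - e)))
                       * (e * q1 * e + (1 - e) * q2 * (1 - e)))
    = ((1 - e) * a + (1 - e) * b * ((1 - e) * r2 * (1 - e)))
      * ((1 - e) * q2 * (1 - e)) by ring: he.
  exact: hq2.
Qed.

Lemma locally_stable_of_corners :
  corner_locally_stable e -> corner_locally_stable (1 - e) -> locally_stable R.
Proof.
move=> h1 h2 a b [x [y hxy]].
have [|_ [[r1 ->] hr1]] := h1 _ _ (in_corner_mul he a) (in_corner_mul he b).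
  exists (e * x), (e * y); do 2!(split; first exact: in_corner_mul).
  have -> : e * a * (e * x) + e * b * (e * y) = e * (a * x + b * y) by ring: he.
  by rewrite hxy mulr1.
have [|_ [[r2 ->] hr2]] := h2 _ _ (in_corner_mul heC a) (in_corner_mul heC b).
  exists ((1 - e) * x), ((1 - e) * y); do 2!(split; first exact: in_corner_mul).
  have -> : (1 - e) * a * ((1 - e) * x) + (1 - e) * b * ((1 - e) * y)
    = (1 - e) * (a * x + b * y) by ring: he.
  by rewrite hxy mulr1.
exists (e * r1 * e + (1 - e) * r2 * (1 - e)).
apply: sr1_quot_of_corners.
- have -> : e * (a + b * (e * r1 * e + (1 - e) * r2 * (1 - e)))
    = e * a + e * b * (e * r1 * e) by ring: he.
  exact: hr1.
- have -> : (1 - e) * (a + b * (e * r1 * e + (1 - e) * r2 * (1 - e)))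
    = (1 - e) * a + (1 - e) * b * ((1 - e) * r2 * (1 - e)) by ring: he.
  exact: hr2.
Qed.

End CornerGluing.

Theorem corollary2p8 (R : comPzRingType) (e : R) (he : e * e = e) :
  locally_stable R <->
  (corner_locally_stable e /\ corner_locally_stable (1 - e)).
Proof.
split=> [hR | [he1 he2]]; last exact: locally_stable_of_corners he1 he2.
split; apply: corner_locally_stable_of_locally_stable hR => //.
exact: idempotent_compl.
Qed.
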